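(* Let $\alpha$ be an action of $A\cong\mathbb R^k\times\mathbb Z^l$ on a compact manifold $M$ with coarse Lyapunov foliations $\mathcal W=\{W^r\}$, let $x_0\in M$, and let $\beta:A\times M\to H$ be any H\''older cocycle over $\alpha$ with values in a Lie group $H$ with bi-invariant metric. Then $\mathcal S_{x_0}(\mathcal W)\subset\ker P_\beta$.
   Context: For an action $\alpha$ of $A$ with Lyapunov exponents $\Delta\subset\operatorname{Hom}(A,\mathbb R)$, the coarse Lyapunov foliation of $r$ is $W^r=\bigcap_{a:\,r(a)<0}W^s_a$, where $W^s_a$ is the stable foliation of $\alpha^a$ (here assumed to exist). A Lyapunov path based at $x_0$ is a finite sequence $(x_0,\dots,x_N)$ with $x_{i+1}\in W^{r_i}(x_i)$ for some $r_i$; it is a cycle if $x_N=x_0$. Cycles form a group $\mathcal C_{x_0}(\mathcal W)$ under concatenation (a cycle cancels with its reverse). A cycle is stable if there is $a\in A$ with $r_i(a)<0$ for all $i$; $\mathcal S_{x_0}(\mathcal W)$ is the normal subgroup of $\mathcal C_{x_0}(\mathcal W)$ generated by stable cycles. For a H\''older cocycle $\beta$ (i.e. $\beta(ab,x)=\beta(a,\alpha^b x)\beta(b,x)$), and $y\in W^r(x)$, set $p_\beta(x,y)=\lim_{n\to\infty}\beta(na,x)^{-1}\beta(na,y)$ for any $a$ with $r(a)<0$ (independent of such $a$). The periodic cycle functional is $P_\beta(x_0,\dots,x_N=x_0)=\prod_{i=0}^{N-1}p_\beta(x_i,x_{i+1})$. *)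

From Stdlib Require Import Reals ZArith List.
From Stdlib Require Fin.
Open Scope R_scope.

Definition Avec (k l : nat) : Type := ((Fin.t k -> R) * (Fin.t l -> Z))%type.

Definition addA {k l} (a b : Avec k l) : Avec k l :=
  (fun i => fst a i + fst b i, fun j => (snd a j + snd b j)%Z).
Definition zeroA {k l} : Avec k l := (fun _ => 0, fun _ => 0%Z).
Definition nsmulA {k l} (n : nat) (a : Avec k l) : Avec k l :=
  (fun i => INR n * fst a i, fun j => (Z.of_nat n * snd a j)%Z).

Fixpoint fsum (n : nat) : (Fin.t n -> R) -> R :=
  match n return (Fin.t n -> R) -> R with
  | O => fun _ => 0
  | S m => fun f => f Fin.F1 + fsum m (fun i => f (Fin.FS i))
  end.

(* Continuous homomorphisms A -> R, i.e. elements of Hom(A,R),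
   given by their coefficients. *)
Definition HomAR (k l : nat) : Type := ((Fin.t k -> R) * (Fin.t l -> R))%type.
Definition evalH {k l} (r : HomAR k l) (a : Avec k l) : R :=
  fsum k (fun i => fst r i * fst a i) + fsum l (fun j => snd r j * IZR (snd a j)).

Definition is_metric {X : Type} (d : X -> X -> R) : Prop :=
  (forall x y, 0 <= d x y) /\ (forall x y, d x y = 0 <-> x = y) /\
  (forall x y, d x y = d y x) /\ (forall x y z, d x z <= d x y + d y z).

Definition converges {X : Type} (d : X -> X -> R) (u : nat -> X) (L : X) : Prop :=
  forall eps, 0 < eps -> exists N, forall n, (N <= n)%nat -> d (u n) L < eps.

Definition seq_compact {X : Type} (d : X -> X -> R) : Prop :=
  forall u : nat -> X, exists (phi : nat -> nat) (L : X),
    (forall n, (phi n < phi (S n))%nat) /\ converges d (fun n => u (phi n)) L.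

Definition continuous_map {X Y : Type} (dX : X -> X -> R) (dY : Y -> Y -> R)
  (f : X -> Y) : Prop :=
  forall x eps, 0 < eps -> exists delta, 0 < delta /\
    forall y, dX x y < delta -> dY (f x) (f y) < eps.

Definition complete {X : Type} (d : X -> X -> R) : Prop :=
  forall u : nat -> X,
    (forall eps, 0 < eps -> exists N, forall n m, (N <= n)%nat -> (N <= m)%nat ->
        d (u n) (u m) < eps) ->
    exists L, converges d u L.

Definition is_group {H : Type} (mul : H -> H -> H) (inv : H -> H) (e : H) : Prop :=
  (forall x y z, mul x (mul y z) = mul (mul x y) z) /\
  (forall x, mul e x = x) /\ (forall x, mul x e = x) /\
  (forall x, mul (inv x) x = e) /\ (forall x, mul x (inv x) = e).

Definition bi_invariant {H : Type} (mul : H -> H -> H) (dH : H -> H -> R) : Prop :=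
  forall g x y, dH (mul g x) (mul g y) = dH x y /\ dH (mul x g) (mul y g) = dH x y.

Definition is_action {k l} {M : Type} (dM : M -> M -> R)
  (alpha : Avec k l -> M -> M) : Prop :=
  (forall x, alpha zeroA x = x) /\
  (forall a b x, alpha (addA a b) x = alpha a (alpha b x)) /\
  (forall a, continuous_map dM dM (alpha a)).

Definition is_cocycle {k l} {M H : Type} (mul : H -> H -> H)
  (alpha : Avec k l -> M -> M) (beta : Avec k l -> M -> H) : Prop :=
  forall a b x, beta (addA a b) x = mul (beta a (alpha b x)) (beta b x).

Definition holder_in_x {k l} {M H : Type} (dM : M -> M -> R) (dH : H -> H -> R)
  (beta : Avec k l -> M -> H) : Prop :=
  exists theta, 0 < theta /\ theta <= 1 /\
    forall a, exists C, 0 <= C /\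
      forall x y, dH (beta a x) (beta a y) <= C * Rpower (dM x y) theta.

Definition is_equivalence {M : Type} (Rl : M -> M -> Prop) : Prop :=
  (forall x, Rl x x) /\ (forall x y, Rl x y -> Rl y x) /\
  (forall x y z, Rl x y -> Rl y z -> Rl x z).

(* Ws a = the (leaf relation of the) stable foliation of alpha^a *)
Definition stable_foliations {k l} {M : Type} (dM : M -> M -> R)
  (alpha : Avec k l -> M -> M) (Ws : Avec k l -> M -> M -> Prop) : Prop :=
  forall a, is_equivalence (Ws a) /\
    forall x y, Ws a x y ->
      converges (fun u v => Rabs (u - v)) (fun n => dM (alpha (nsmulA n a) x) (alpha (nsmulA n a) y)) 0.

Definition coarseW {k l} {M : Type} (Ws : Avec k l -> M -> M -> Prop)
  (r : HomAR k l) (x y : M) : Prop :=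
  forall a, evalH r a < 0 -> Ws a x y.

(* A path based at x0 is encoded as the list [(r_0,x_1); ...; (r_{N-1},x_N)]. *)
Definition LPath (k l : nat) (M : Type) : Type := list (HomAR k l * M).

Fixpoint lyap_path {k l} {M : Type} (Delta : list (HomAR k l))
  (Ws : Avec k l -> M -> M -> Prop) (x : M) (c : LPath k l M) : Prop :=
  match c with
  | nil => True
  | (r, y) :: c' => In r Delta /\ coarseW Ws r x y /\ lyap_path Delta Ws y c'
  end.

Fixpoint endpt {k l} {M : Type} (x : M) (c : LPath k l M) : M :=
  match c with
  | nil => x
  | (_, y) :: c' => endpt y c'
  end.

Definition lyap_cycle {k l} {M : Type} (Delta : list (HomAR k l))
  (Ws : Avec k l -> M -> M -> Prop) (x0 : M) (c : LPath k l M) : Prop :=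
  lyap_path Delta Ws x0 c /\ endpt x0 c = x0.

Fixpoint revp {k l} {M : Type} (x : M) (c : LPath k l M) : LPath k l M :=
  match c with
  | nil => nil
  | (r, y) :: c' => revp y c' ++ ((r, x) :: nil)
  end.

Definition stable_cycle {k l} {M : Type} (Delta : list (HomAR k l))
  (Ws : Avec k l -> M -> M -> Prop) (x0 : M) (c : LPath k l M) : Prop :=
  lyap_cycle Delta Ws x0 c /\
  exists a : Avec k l, forall r y, In (r, y) c -> evalH r a < 0.

(* elementary relation of the group C_{x0}: a cycle cancels with its reverse *)
Definition cancel_step {k l} {M : Type} (Delta : list (HomAR k l))
  (Ws : Avec k l -> M -> M -> Prop) (x0 : M) (c c' : LPath k l M) : Prop :=
  exists u d v, lyap_cycle Delta Ws x0 u /\ lyap_cycle Delta Ws x0 d /\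
    lyap_cycle Delta Ws x0 v /\
    c = u ++ d ++ revp x0 d ++ v /\ c' = u ++ v.

(* InS c : c represents an element of S_{x0}(W), the normal subgroup of
   C_{x0}(W) generated by the stable cycles *)
Inductive InS {k l} {M : Type} (Delta : list (HomAR k l))
  (Ws : Avec k l -> M -> M -> Prop) (x0 : M) : LPath k l M -> Prop :=
| InS_stable c : stable_cycle Delta Ws x0 c -> InS Delta Ws x0 c
| InS_mul c d : InS Delta Ws x0 c -> InS Delta Ws x0 d -> InS Delta Ws x0 (c ++ d)
| InS_inv c : InS Delta Ws x0 c -> InS Delta Ws x0 (revp x0 c)
| InS_conj g c : lyap_cycle Delta Ws x0 g -> InS Delta Ws x0 c ->
    InS Delta Ws x0 (g ++ c ++ revp x0 g)
| InS_cancel c c' : InS Delta Ws x0 c -> cancel_step Delta Ws x0 c c' ->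
    InS Delta Ws x0 c'
| InS_uncancel c c' : InS Delta Ws x0 c -> cancel_step Delta Ws x0 c' c ->
    InS Delta Ws x0 c'.

Definition is_p_beta {k l} {M H : Type} (mul : H -> H -> H) (inv : H -> H)
  (dH : H -> H -> R) (Delta : list (HomAR k l)) (Ws : Avec k l -> M -> M -> Prop)
  (beta : Avec k l -> M -> H) (p : M -> M -> H) : Prop :=
  forall r x y, In r Delta -> coarseW Ws r x y ->
    forall a, evalH r a < 0 ->
      converges dH (fun n => mul (inv (beta (nsmulA n a) x)) (beta (nsmulA n a) y)) (p x y).

Fixpoint Pfun {k l} {M H : Type} (mul : H -> H -> H) (e : H) (p : M -> M -> H)
  (x : M) (c : LPath k l M) : H :=
  match c with
  | nil => e
  | (_, y) :: c' => mul (p x y) (Pfun mul e p y c')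
  end.

(* Stable cycles lie in the kernel of the periodic cycle functional.

   Let c = (x0, x1, ..., xN = x0) be a Lyapunov cycle and a an element with
   r_i(a) < 0 for every leg.  Writing g_n(x) = beta(na, x), each factor
   p(x_i, x_{i+1}) is the limit of g_n(x_i)^-1 g_n(x_{i+1}); since the metric
   on H is bi-invariant, multiplication is jointly continuous and the product
   of these limits is the limit of the telescoping product
   g_n(x0)^-1 g_n(xN) = e.  Hence P(c) = e for stable cycles.

   The theorem follows
   by induction on the generation of S_{x0}, carrying the fact that its
   members are cycles. *)
From Stdlib Require Import Reals ZArith List Lra.
Open Scope R_scope.

Section Limits.
Variables (X : Type) (d : X -> X -> R).
Hypothesis Hd : is_metric d.

Lemma converges_ext (u v : nat -> X) (L : X) :
  (forall n, u n = v n) -> converges d u L -> converges d v L.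
Proof.
  intros Huv Hu eps Heps. destruct (Hu eps Heps) as [N HN].
  exists N. intros n Hn. rewrite <- Huv. auto.
Qed.

Lemma converges_const (c : X) : converges d (fun _ => c) c.
Proof.
  destruct Hd as [_ [Hzero _]]. intros eps Heps. exists 0%nat. intros n _.
  rewrite (proj2 (Hzero c c) eq_refl). exact Heps.
Qed.

Lemma converges_unique (u : nat -> X) (L K : X) :
  converges d u L -> converges d u K -> L = K.
Proof.
  destruct Hd as [Hpos [Hzero [Hsym Htri]]]. intros HL HK.
  destruct (Rle_lt_dec (d L K) 0) as [Hle | Hlt].
  - apply Hzero. specialize (Hpos L K). lra.
  - destruct (HL (d L K / 2)) as [N1 HN1]; [lra |].
    destruct (HK (d L K / 2)) as [N2 HN2]; [lra |].
    set (n := max N1 N2).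
    specialize (HN1 n (Nat.le_max_l _ _)). specialize (HN2 n (Nat.le_max_r _ _)).
    pose proof (Htri L (u n) K) as Htri'. rewrite (Hsym L (u n)) in Htri'. lra.
Qed.
End Limits.

Section BiInvariantGroup.
Variables (H : Type) (mul : H -> H -> H) (inv : H -> H) (e : H) (dH : H -> H -> R).
Hypothesis Hgrp : is_group mul inv e.
Hypothesis HdH : is_metric dH.
Hypothesis Hbi : bi_invariant mul dH.

Lemma inv_unique (x y : H) : mul x y = e -> inv x = y.
Proof.
  destruct Hgrp as [Hassoc [Hl [Hr [Hli _]]]]. intros Hxy.
  rewrite <- (Hr (inv x)), <- Hxy, Hassoc, Hli, Hl. reflexivity.
Qed.

Lemma inv_mul (a b : H) : inv (mul a b) = mul (inv b) (inv a).
Proof.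
  apply inv_unique. destruct Hgrp as [Hassoc [Hl [_ [_ Hri]]]].
  rewrite <- Hassoc, (Hassoc b), Hri, Hl, Hri. reflexivity.
Qed.

Lemma inv_inv (a : H) : inv (inv a) = a.
Proof. apply inv_unique. apply Hgrp. Qed.

Lemma inv_e : inv e = e.
Proof. apply inv_unique. apply Hgrp. Qed.

(* With a bi-invariant metric, inversion is an isometry:
   d(x^-1, y^-1) = d(e, x y^-1) = d(y, x). *)
Lemma inv_isometry (x y : H) : dH (inv x) (inv y) = dH x y.
Proof.
  destruct Hgrp as [Hassoc [Hl [Hr [Hli Hri]]]]. destruct HdH as [_ [_ [Hsym _]]].
  rewrite <- (proj1 (Hbi x (inv x) (inv y))), Hri.
  rewrite <- (proj2 (Hbi y e (mul x (inv y)))), Hl, <- Hassoc, Hli, Hr.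
  apply Hsym.
Qed.

(* Hence inversion is continuous ... *)
Lemma converges_inv (u : nat -> H) (L : H) :
  converges dH u L -> converges dH (fun n => inv (u n)) (inv L).
Proof.
  intros Hu eps Heps. destruct (Hu eps Heps) as [N HN].
  exists N. intros n Hn. rewrite inv_isometry. auto.
Qed.

(* ... and so is multiplication, jointly:
   d(u v, L K) <= d(u, L) + d(v, K). *)
Lemma converges_mul (u v : nat -> H) (L K : H) :
  converges dH u L -> converges dH v K -> converges dH (fun n => mul (u n) (v n)) (mul L K).
Proof.
  destruct HdH as [_ [_ [_ Htri]]]. intros Hu Hv eps Heps.
  destruct (Hu (eps / 2)) as [N1 HN1]; [lra |].
  destruct (Hv (eps / 2)) as [N2 HN2]; [lra |].
  exists (max N1 N2). intros n Hn.
  eapply Rle_lt_trans; [apply Htri with (y := mul L (v n)) |].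
  rewrite (proj2 (Hbi (v n) (u n) L)), (proj1 (Hbi L (v n) K)).
  specialize (HN1 n (Nat.max_lub_l _ _ _ Hn)). specialize (HN2 n (Nat.max_lub_r _ _ _ Hn)).
  lra.
Qed.
End BiInvariantGroup.

Section Exponents.
Variables k l : nat.

Lemma fsum_opp (n : nat) (f g : Fin.t n -> R) :
  (forall i, f i = - g i) -> fsum n f = - fsum n g.
Proof.
  revert f g. induction n as [| n IH]; intros f g Hfg; simpl.
  - ring.
  - rewrite (IH (fun i => f (Fin.FS i)) (fun i => g (Fin.FS i))) by (intros; apply Hfg).
    rewrite Hfg. ring.
Qed.

Definition negA (a : Avec k l) : Avec k l :=
  (fun i => - fst a i, fun j => (- snd a j)%Z).

Lemma evalH_neg (r : HomAR k l) (a : Avec k l) : evalH r (negA a) = - evalH r a.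
Proof.
  unfold evalH, negA; simpl.
  rewrite (fsum_opp k _ (fun i => fst r i * fst a i)) by (intros; ring).
  rewrite (fsum_opp l _ (fun j => snd r j * IZR (snd a j))) by (intros; rewrite opp_IZR; ring).
  ring.
Qed.

Lemma exponent_negative_somewhere (r : HomAR k l) :
  (exists a, evalH r a <> 0) -> exists a, evalH r a < 0.
Proof.
  intros [a Ha]. destruct (Rlt_dec (evalH r a) 0) as [Hneg | Hnneg].
  - exists a. exact Hneg.
  - exists (negA a). rewrite evalH_neg. lra.
Qed.
End Exponents.

Section LyapunovPaths.
Variables (k l : nat) (M : Type) (dM : M -> M -> R) (alpha : Avec k l -> M -> M).
Variables (Delta : list (HomAR k l)) (Ws : Avec k l -> M -> M -> Prop).
Hypothesis HWs : stable_foliations dM alpha Ws.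
Variable x0 : M.

Lemma endpt_app (a b : LPath k l M) (x : M) : endpt x (a ++ b) = endpt (endpt x a) b.
Proof. revert x. induction a as [| [r y] a IH]; intros x; simpl; auto. Qed.

Lemma lyap_path_app (a b : LPath k l M) (x : M) :
  lyap_path Delta Ws x (a ++ b) <-> lyap_path Delta Ws x a /\ lyap_path Delta Ws (endpt x a) b.
Proof.
  revert x. induction a as [| [r y] a IH]; intros x; simpl.
  - tauto.
  - rewrite IH. tauto.
Qed.

Lemma endpt_revp (c : LPath k l M) (x : M) : endpt (endpt x c) (revp x c) = x.
Proof.
  revert x. induction c as [| [r y] c IH]; intros x; simpl; auto.
  rewrite endpt_app, IH. reflexivity.
Qed.

Lemma coarseW_sym (r : HomAR k l) (x y : M) : coarseW Ws r x y -> coarseW Ws r y x.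
Proof. intros Hxy a Ha. destruct (HWs a) as [[_ [Hsym _]] _]. apply Hsym, Hxy, Ha. Qed.

Lemma lyap_path_revp (c : LPath k l M) (x : M) :
  lyap_path Delta Ws x c -> lyap_path Delta Ws (endpt x c) (revp x c).
Proof.
  revert x. induction c as [| [r y] c IH]; intros x Hc; simpl in *; auto.
  destruct Hc as [Hin [Hxy Hc]]. apply lyap_path_app. split; [apply IH; auto |].
  rewrite endpt_revp. simpl. repeat split; auto. apply coarseW_sym, Hxy.
Qed.

Lemma cycle_app (a b : LPath k l M) :
  lyap_cycle Delta Ws x0 a -> lyap_cycle Delta Ws x0 b -> lyap_cycle Delta Ws x0 (a ++ b).
Proof.
  intros [Ha Ea] [Hb Eb]. split.
  - apply lyap_path_app. rewrite Ea. auto.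
  - rewrite endpt_app, Ea. exact Eb.
Qed.

Lemma cycle_revp (a : LPath k l M) :
  lyap_cycle Delta Ws x0 a -> lyap_cycle Delta Ws x0 (revp x0 a).
Proof.
  intros [Ha Ea]. split.
  - rewrite <- Ea at 1. apply lyap_path_revp, Ha.
  - rewrite <- Ea at 1. apply endpt_revp.
Qed.

Lemma InS_cycle (c : LPath k l M) : InS Delta Ws x0 c -> lyap_cycle Delta Ws x0 c.
Proof.
  intros HS. induction HS as [c Hst | c d _ Hc _ Hd | c _ Hc | g c Hg _ Hc
                              | c c' _ Hc [u [d [v [Cu [Cd [Cv [E1 E2]]]]]]]
                              | c c' _ Hc [u [d [v [Cu [Cd [Cv [E1 E2]]]]]]]].
  - apply Hst.
  - apply cycle_app; auto.
  - apply cycle_revp, Hc.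
  - apply cycle_app; [| apply cycle_app]; auto. apply cycle_revp, Hg.
  - subst c'. apply cycle_app; auto.
  - subst c'. apply cycle_app; [| apply cycle_app; [| apply cycle_app]]; auto.
    apply cycle_revp, Cd.
Qed.
End LyapunovPaths.

Section PeriodicCycleFunctional.
Variables (k l : nat) (M : Type) (dM : M -> M -> R) (alpha : Avec k l -> M -> M).
Variables (Delta : list (HomAR k l)) (Ws : Avec k l -> M -> M -> Prop).
Hypothesis HDelta : forall r, In r Delta -> exists a, evalH r a <> 0.
Hypothesis HWs : stable_foliations dM alpha Ws.
Variables (H : Type) (mul : H -> H -> H) (inv : H -> H) (e : H) (dH : H -> H -> R).
Hypothesis Hgrp : is_group mul inv e.
Hypothesis HdH : is_metric dH.
Hypothesis Hbi : bi_invariant mul dH.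
Variables (beta : Avec k l -> M -> H) (p : M -> M -> H).
Hypothesis Hp : is_p_beta mul inv dH Delta Ws beta p.
Variable x0 : M.

Notation P := (Pfun mul e p).

Lemma Pfun_app (a b : LPath k l M) (x : M) : P x (a ++ b) = mul (P x a) (P (endpt x a) b).
Proof.
  destruct Hgrp as [Hassoc [Hl _]]. revert x.
  induction a as [| [r y] a IH]; intros x; simpl.
  - rewrite Hl. reflexivity.
  - rewrite IH. apply Hassoc.
Qed.

(* p(y, x) = p(x, y)^-1: both sides are limits of
   g_n(y)^-1 g_n(x) = (g_n(x)^-1 g_n(y))^-1 for one a with r(a) < 0. *)
Lemma p_antisym (r : HomAR k l) (x y : M) :
  In r Delta -> coarseW Ws r x y -> p y x = inv (p x y).
Proof.
  intros Hin Hxy. destruct (exponent_negative_somewhere k l r (HDelta r Hin)) as [a Ha].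
  apply (converges_unique H dH HdH
           (fun n => mul (inv (beta (nsmulA n a) y)) (beta (nsmulA n a) x))).
  - apply (Hp r y x Hin (coarseW_sym k l M dM alpha Ws HWs r x y Hxy) a Ha).
  - eapply converges_ext;
      [| apply (converges_inv H mul inv e dH Hgrp HdH Hbi), (Hp r x y Hin Hxy a Ha)].
    intros n. simpl. rewrite (inv_mul H mul inv e Hgrp), (inv_inv H mul inv e Hgrp).
    reflexivity.
Qed.

Lemma Pfun_revp (c : LPath k l M) (x : M) :
  lyap_path Delta Ws x c -> P (endpt x c) (revp x c) = inv (P x c).
Proof.
  destruct Hgrp as [_ [_ [Hr _]]]. revert x.
  induction c as [| [r y] c IH]; intros x Hc; simpl in *.
  - symmetry. apply (inv_e H mul inv e Hgrp).
  - destruct Hc as [Hin [Hxy Hc]].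
    rewrite Pfun_app, (endpt_revp k l M), IH by exact Hc. simpl.
    rewrite Hr, (inv_mul H mul inv e Hgrp), (p_antisym r x y Hin Hxy). reflexivity.
Qed.

Lemma Pfun_revp_cycle (c : LPath k l M) :
  lyap_cycle Delta Ws x0 c -> P x0 (revp x0 c) = inv (P x0 c).
Proof. intros [Hc Ec]. rewrite <- (Pfun_revp c x0 Hc), Ec. reflexivity. Qed.

(* Telescoping: along a path all of whose exponents are negative at a,
   P is the limit of beta(na, x)^-1 beta(na, end of the path). *)
Lemma Pfun_telescope (a : Avec k l) (c : LPath k l M) (x : M) :
  lyap_path Delta Ws x c -> (forall r y, In (r, y) c -> evalH r a < 0) ->
  converges dH (fun n => mul (inv (beta (nsmulA n a) x)) (beta (nsmulA n a) (endpt x c)))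
    (P x c).
Proof.
  destruct Hgrp as [Hassoc [Hl [_ [Hli Hri]]]]. revert x.
  induction c as [| [r y] c IH]; intros x Hc Hneg; simpl in *.
  - eapply converges_ext; [| apply (converges_const H dH HdH)].
    intros n. symmetry. apply Hli.
  - destruct Hc as [Hin [Hxy Hc]].
    eapply converges_ext;
      [| apply (converges_mul H mul dH HdH Hbi _ _ _ _
                 (Hp r x y Hin Hxy a (Hneg r y (or_introl eq_refl)))
                 (IH y Hc (fun r' y' H' => Hneg r' y' (or_intror H'))))].
    intros n. simpl. rewrite <- Hassoc, (Hassoc (beta (nsmulA n a) y)), Hri, Hl. reflexivity.
Qed.

Lemma Pfun_stable_cycle (c : LPath k l M) : stable_cycle Delta Ws x0 c -> P x0 c = e.
Proof.
  intros [[Hc Ec] [a Hneg]].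
  pose proof (Pfun_telescope a c x0 Hc Hneg) as Htel. rewrite Ec in Htel.
  apply (converges_unique H dH HdH _ _ _ Htel).
  eapply converges_ext; [| apply (converges_const H dH HdH)].
  intros n. symmetry. apply Hgrp.
Qed.

Lemma Pfun_cancel (u d v : LPath k l M) :
  lyap_cycle Delta Ws x0 u -> lyap_cycle Delta Ws x0 d ->
  P x0 (u ++ d ++ revp x0 d ++ v) = P x0 (u ++ v).
Proof.
  destruct Hgrp as [Hassoc [Hl [_ [_ Hri]]]]. intros Cu Cd.
  rewrite !Pfun_app, (proj2 Cu), (proj2 Cd),
    (proj2 (cycle_revp k l M dM alpha Delta Ws HWs x0 d Cd)), (Pfun_revp_cycle d Cd).
  rewrite (Hassoc (P x0 d)), Hri, Hl. reflexivity.
Qed.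

(* Since P is a homomorphism on cycles that kills stable cycles, it kills
   the normal subgroup they generate. *)
Lemma Pfun_InS (c : LPath k l M) : InS Delta Ws x0 c -> P x0 c = e.
Proof.
  destruct Hgrp as [_ [Hl [_ [_ Hri]]]]. intros HS.
  induction HS as [c Hst | c d Sc Pc Sd Pd | c Sc Pc | g c Cg Sc Pc
                  | c c' _ Pc [u [d [v [Cu [Cd [_ [E1 E2]]]]]]]
                  | c c' _ Pc [u [d [v [Cu [Cd [_ [E1 E2]]]]]]]].
  - apply Pfun_stable_cycle, Hst.
  - rewrite Pfun_app, (proj2 (InS_cycle k l M dM alpha Delta Ws HWs x0 c Sc)), Pc, Pd.
    apply Hl.
  - rewrite (Pfun_revp_cycle c (InS_cycle k l M dM alpha Delta Ws HWs x0 c Sc)), Pc.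
    apply (inv_e H mul inv e Hgrp).
  - rewrite !Pfun_app, (proj2 Cg),
      (proj2 (InS_cycle k l M dM alpha Delta Ws HWs x0 c Sc)), Pc, Hl, (Pfun_revp_cycle g Cg).
    apply Hri.
  - subst c c'. rewrite <- (Pfun_cancel u d v Cu Cd). exact Pc.
  - subst c c'. rewrite (Pfun_cancel u d v Cu Cd). exact Pc.
Qed.
End PeriodicCycleFunctional.

Theorem mainTheorem3
  (k l : nat)
  (M : Type) (dM : M -> M -> R)
  (HdM : is_metric dM) (Mcpt : seq_compact dM)
  (alpha : Avec k l -> M -> M) (Halpha : is_action dM alpha)
  (Delta : list (HomAR k l))
  (HDelta : forall r, In r Delta -> exists a, evalH r a <> 0)
  (Ws : Avec k l -> M -> M -> Prop) (HWs : stable_foliations dM alpha Ws)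
  (x0 : M)
  (H : Type) (mul : H -> H -> H) (inv : H -> H) (e : H) (dH : H -> H -> R)
  (Hgrp : is_group mul inv e) (HdH : is_metric dH) (Hcompl : complete dH)
  (Hbi : bi_invariant mul dH)
  (beta : Avec k l -> M -> H) (Hcoc : is_cocycle mul alpha beta)
  (Hhol : holder_in_x dM dH beta)
  (p : M -> M -> H) (Hp : is_p_beta mul inv dH Delta Ws beta p) :
  forall c : LPath k l M, InS Delta Ws x0 c -> Pfun mul e p x0 c = e.
Proof.
  exact (Pfun_InS k l M dM alpha Delta Ws HDelta HWs H mul inv e dH Hgrp HdH Hbi beta p Hp x0).
Qed.
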